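(* Let $\tau$ be a permutation. Let $M_{\tau,top}$ (resp. $M_{\tau,bottom}$) be the quasi-permutation matrix obtained by adding a row of $0$ entries above (resp. below) the permutation matrix of $\tau$, and let $M_{\tau,right}$ (resp. $M_{\tau,left}$) be the matrix obtained by adding a column of $0$ entries to the right (resp. left) of the permutation matrix of $\tau$. Then the permutations of $Av_{\mathfrak{S}}(M_{\tau,top})$ (resp. $Av_{\mathfrak{S}}(M_{\tau,bottom})$, $Av_{\mathfrak{S}}(M_{\tau,right})$, $Av_{\mathfrak{S}}(M_{\tau,left})$) are exactly the permutations obtained from a permutation avoiding $\tau$ by adding a maximal (resp. minimal, resp. last, resp. first) element.
   Context: A permutation $\sigma$ of $\{1,\dots,n\}$ is identified with its permutation matrix $M_\sigma$, with $M_\sigma(i,j)=1$ iff $i=\sigma(j)$ and rows numbered from bottom to top (so ''above'' means larger values and ''right'' means larger positions). A matrix is a submatrix of another if obtained by deleting rows and/or columns. A permutation $\sigma$ contains $\pi$ as a pattern iff $M_\pi$ is a submatrix of $M_\sigma$; $\sigma$ avoids $\tau$ otherwise. $Av_{\mathfrak{S}}(M)$ is the set of permutations whose matrix has no submatrix equal to $M$. Adding a maximal element to a permutation $\sigma'$ of size $n$ means forming a permutation of size $n+1$ whose matrix is obtained from $M_{\sigma'}$ by inserting a new top row and a new column (anywhere) with a $1$ at their intersection; adding a minimal, last, or first element is defined analogously (new bottom row, new rightmost column, new leftmost column respectively). *)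

From mathcomp Require Import all_boot all_algebra all_fingroup.
Set Implicit Arguments. Unset Strict Implicit. Unset Printing Implicit Defensive.

(* Matrices are 0/1 matrices 'M[bool]_(m,n); row index i (0 = bottom row,
   larger = higher), column index j (0 = leftmost). *)

Definition pmx n (s : 'S_n) : 'M[bool]_(n, n) := \matrix_(i, j) (i == s j).

Definition submx_of p q m n (A : 'M[bool]_(p, q)) (M : 'M[bool]_(m, n)) : Prop :=
  exists (f : 'I_p -> 'I_m) (g : 'I_q -> 'I_n),
    (forall i i' : 'I_p, i < i' -> f i < f i') /\
    (forall j j' : 'I_q, j < j' -> g j < g j') /\
    (forall i j, A i j = M (f i) (g j)).

Definition avoids_mx p q n (A : 'M[bool]_(p, q)) (s : 'S_n) : Prop :=
  ~ submx_of A (pmx s).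

Definition avoids k n (t : 'S_k) (s : 'S_n) : Prop := avoids_mx (pmx t) s.

Definition mx_top k (t : 'S_k) : 'M[bool]_(k.+1, k) :=
  \matrix_(i, j) match unlift ord_max i with Some i' => pmx t i' j | None => false end.
Definition mx_bottom k (t : 'S_k) : 'M[bool]_(k.+1, k) :=
  \matrix_(i, j) match unlift ord0 i with Some i' => pmx t i' j | None => false end.
Definition mx_right k (t : 'S_k) : 'M[bool]_(k, k.+1) :=
  \matrix_(i, j) match unlift ord_max j with Some j' => pmx t i j' | None => false end.
Definition mx_left k (t : 'S_k) : 'M[bool]_(k, k.+1) :=
  \matrix_(i, j) match unlift ord0 j with Some j' => pmx t i j' | None => false end.

Definition ins_rc n (r c : 'I_n.+1) (M : 'M[bool]_(n, n)) : 'M[bool]_(n.+1, n.+1) :=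
  \matrix_(i, j) match unlift r i, unlift c j with
                 | Some i', Some j' => M i' j'
                 | None, None => true
                 | _, _ => false
                 end.

Definition add_max n (s' : 'S_n) (s : 'S_n.+1) : Prop :=
  exists c : 'I_n.+1, pmx s = ins_rc ord_max c (pmx s').
Definition add_min n (s' : 'S_n) (s : 'S_n.+1) : Prop :=
  exists c : 'I_n.+1, pmx s = ins_rc ord0 c (pmx s').
Definition add_last n (s' : 'S_n) (s : 'S_n.+1) : Prop :=
  exists r : 'I_n.+1, pmx s = ins_rc r ord_max (pmx s').
Definition add_first n (s' : 'S_n) (s : 'S_n.+1) : Prop :=
  exists r : 'I_n.+1, pmx s = ins_rc r ord0 (pmx s').

From mathcomp Require Import all_boot all_algebra all_fingroup.
Set Implicit Arguments. Unset Strict Implicit. Unset Printing Implicit Defensive.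

(* The maximum of sigma sits in the top row of M_sigma.  An occurrence of
   M_{tau,top} must use, for its zero row, a row strictly above the rows
   carrying tau, so those rows avoid the top row; and no column used by the
   occurrence can be the column of the maximum, whose only 1 lies in the top
   row.  Hence M_{tau,top} occurs in sigma iff tau occurs in sigma with its
   maximum removed, and conversely any occurrence of tau there is completed
   by the top row.  The bottom case is the mirror image, and the column cases
   follow by transposition. *)

(* [mx_top t], [mx_bottom t], [mx_right t], [mx_left t] are definitionally
   the instances of these two at [ord_max] and [ord0]. *)
Definition pmx_zero_row k (p : 'I_k.+1) (t : 'S_k) : 'M[bool]_(k.+1, k) :=
  \matrix_(i, j) match unlift p i with Some i' => pmx t i' j | None => false end.

Definition pmx_zero_col k (q : 'I_k.+1) (t : 'S_k) : 'M[bool]_(k, k.+1) :=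
  \matrix_(i, j) match unlift q j with Some j' => pmx t i j' | None => false end.

Definition extend_at k n (p : 'I_k.+1) (r : 'I_n.+1) (f : 'I_k -> 'I_n)
    (i : 'I_k.+1) : 'I_n.+1 :=
  match unlift p i with Some i' => lift r (f i') | None => r end.

Lemma ltn_lift n (h : 'I_n.+1) (a b : 'I_n) : (lift h a < lift h b) = (a < b).
Proof. by rewrite /= !ltnNge leq_bump2. Qed.

Lemma extend_at_lift k n p r f (i : 'I_k) : @extend_at k n p r f (lift p i) = lift r (f i).
Proof. by rewrite /extend_at liftK. Qed.

Lemma extend_at_id k n p r f : @extend_at k n p r f p = r.
Proof. by rewrite /extend_at unlift_none. Qed.

Section ZeroRow.

Variables (k n : nat) (tau : 'S_k) (p : 'I_k.+1) (r : 'I_n.+1).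

(* Both hypotheses hold when p and r are the same extreme index (first or
   last); for an inner zero row the equivalence is false. *)
Hypothesis homo_lift_neq : forall F : 'I_k.+1 -> 'I_n.+1,
  {homo F : i j / i < j} -> forall i, F (lift p i) != r.

Hypothesis homo_extend_at : forall f : 'I_k -> 'I_n,
  {homo f : i j / i < j} -> {homo extend_at p r f : i j / i < j}.

Lemma submx_zero_row_ins_rc c (M : 'M[bool]_n) :
  submx_of (pmx_zero_row p tau) (ins_rc r c M) <-> submx_of (pmx tau) M.
Proof.
split=> [[F [G [homoF [homoG FG]]]] | [f [g [homof [homog fg]]]]].
- have /fin_all_exists [f Ff] : forall i, exists i', F (lift p i) = lift r i'.
    move=> i; case: (unliftP r (F (lift p i))) => [i' -> | Fi]; first by exists i'.
    by have := homo_lift_neq homoF i; rewrite Fi eqxx.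
  (* column c of [ins_rc r c M] is zero off row r, while column j of M_tau is not *)
  have /fin_all_exists [g Gg] : forall j, exists j', G j = lift c j'.
    move=> j; case: (unliftP c (G j)) => [j' -> | Gj]; first by exists j'.
    have := FG (lift p (tau j)) j.
    by rewrite !mxE liftK mxE eqxx Ff liftK Gj unlift_none.
  exists f, g; split; [|split].
  + by move=> i i' lti; have := homoF (lift p i) (lift p i'); rewrite !Ff !ltn_lift; apply.
  + by move=> j j' ltj; have := homoG _ _ ltj; rewrite !Gg ltn_lift.
  + by move=> i j; have := FG (lift p i) j; rewrite !mxE liftK Ff Gg !liftK => <-; rewrite mxE.
- exists (extend_at p r f), (fun j => lift c (g j)); split; [|split].
  + exact: homo_extend_at.
  + by move=> j j' ltj; rewrite ltn_lift; apply: homog.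
  + move=> i j; rewrite !mxE; case: (unliftP p i) => [i' -> | ->].
    * by rewrite extend_at_lift !liftK fg.
    * by rewrite extend_at_id unlift_none liftK.
Qed.

End ZeroRow.

Lemma submx_of_tr p q m n (A : 'M[bool]_(p, q)) (M : 'M[bool]_(m, n)) :
  submx_of A M -> submx_of (trmx A) (trmx M).
Proof.
move=> [f [g [homof [homog fg]]]]; exists g, f; split; [by []|split; [by []|]].
by move=> i j; rewrite !mxE.
Qed.

Lemma submx_of_trE p q m n (A : 'M[bool]_(p, q)) (M : 'M[bool]_(m, n)) :
  submx_of (trmx A) (trmx M) <-> submx_of A M.
Proof. by split=> [/submx_of_tr|/submx_of_tr //]; rewrite !trmxK. Qed.

Lemma tr_pmx n (s : 'S_n) : trmx (pmx s) = pmx s^-1.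
Proof.
by apply/matrixP => i j; rewrite !mxE eq_sym (can2_eq (permK s) (permKV s)).
Qed.

Lemma tr_ins_rc n (r c : 'I_n.+1) (M : 'M[bool]_n) :
  trmx (ins_rc r c M) = ins_rc c r (trmx M).
Proof.
apply/matrixP => i j; rewrite !mxE.
by case: (unlift c i) => [a|]; case: (unlift r j) => [b|] //; rewrite mxE.
Qed.

Lemma pmx_zero_col_tr k (q : 'I_k.+1) (tau : 'S_k) :
  pmx_zero_col q tau = trmx (pmx_zero_row q tau^-1).
Proof.
apply/matrixP => i j; rewrite !mxE; case: (unlift q j) => // j'.
by rewrite !mxE eq_sym (can2_eq (permK tau) (permKV tau)).
Qed.

Lemma submx_zero_col_ins_rc k n (tau : 'S_k) (q : 'I_k.+1) (c : 'I_n.+1)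
    (homo_lift_neq : forall F : 'I_k.+1 -> 'I_n.+1,
       {homo F : i j / i < j} -> forall i, F (lift q i) != c)
    (homo_extend_at : forall f : 'I_k -> 'I_n,
       {homo f : i j / i < j} -> {homo extend_at q c f : i j / i < j})
    r (M : 'M[bool]_n) :
  submx_of (pmx_zero_col q tau) (ins_rc r c M) <-> submx_of (pmx tau) M.
Proof.
rewrite pmx_zero_col_tr -[ins_rc r c M]trmxK tr_ins_rc.
apply: iff_trans (submx_of_trE _ _) _.
apply: iff_trans (submx_zero_row_ins_rc _ homo_lift_neq homo_extend_at _ _) _.
by rewrite -tr_pmx; apply: submx_of_trE.
Qed.

Lemma homo_lift_max_neq k n (F : 'I_k.+1 -> 'I_n.+1) :
  {homo F : i j / i < j} -> forall i, F (lift ord_max i) != ord_max.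
Proof.
move=> homoF i; apply/eqP => Fi.
by have := homoF (lift ord_max i) ord_max; rewrite lift_max ltn_ord Fi ltnNge leq_ord => /(_ isT).
Qed.

Lemma homo_lift0_neq k n (F : 'I_k.+1 -> 'I_n.+1) :
  {homo F : i j / i < j} -> forall i, F (lift ord0 i) != ord0.
Proof.
by move=> homoF i; apply/eqP => Fi; have := homoF ord0 (lift ord0 i); rewrite Fi ltn0 => /(_ isT).
Qed.

Lemma homo_extend_at_max k n (f : 'I_k -> 'I_n) :
  {homo f : i j / i < j} -> {homo extend_at ord_max ord_max f : i j / i < j}.
Proof.
move=> homof i i'.
case: (unliftP ord_max i) => [a ->|->]; case: (unliftP ord_max i') => [b ->|->];
  rewrite ?extend_at_lift ?extend_at_id ?lift_max ?ltnn //.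
- exact: homof.
- by rewrite ltnNge (ltnW (ltn_ord b)).
Qed.

Lemma homo_extend_at0 k n (f : 'I_k -> 'I_n) :
  {homo f : i j / i < j} -> {homo extend_at ord0 ord0 f : i j / i < j}.
Proof.
move=> homof i i'.
case: (unliftP ord0 i) => [a ->|->]; case: (unliftP ord0 i') => [b ->|->];
  rewrite ?extend_at_lift ?extend_at_id ?lift0 ?ltnn ?ltn0 //.
by rewrite !ltnS; apply: homof.
Qed.

Lemma pmx_ins_rc_remove n (s : 'S_n.+1) (c : 'I_n.+1) :
  exists s' : 'S_n, pmx s = ins_rc (s c) c (pmx s').
Proof.
have /fin_all_exists [f sf] : forall j : 'I_n, exists j', s (lift c j) = lift (s c) j'.
  move=> j; case: (unliftP (s c) (s (lift c j))) => [j' -> | ]; first by exists j'.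
  by move/perm_inj/eqP; rewrite lift_eqF.
have f_inj : injective f.
  by move=> a b /(congr1 (lift (s c))); rewrite -!sf => /perm_inj /lift_inj.
exists (perm f_inj); apply/matrixP => i j; rewrite !mxE.
case: (unliftP (s c) i) => [i' -> | ->]; case: (unliftP c j) => [j' -> | ->].
- by rewrite ?liftK !mxE permE sf (inj_eq lift_inj).
- by rewrite lift_eqF.
- by rewrite (inj_eq perm_inj) eq_liftF.
- by rewrite eqxx.
Qed.

Section AvoidsInsRc.

Variables (a b k n : nat) (A : 'M[bool]_(a, b)) (tau : 'S_k).

Lemma avoids_mx_ins_row (r : 'I_n.+1)
    (submx_A : forall c (M : 'M[bool]_n), submx_of A (ins_rc r c M) <-> submx_of (pmx tau) M)
    (s : 'S_n.+1) :
  avoids_mx A s <-> exists s' : 'S_n, avoids tau s' /\ exists c, pmx s = ins_rc r c (pmx s').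
Proof.
rewrite /avoids_mx; split=> [avA | [s' [avtau [c ->]]] /submx_A //].
have [s' s_ins] := pmx_ins_rc_remove s (s^-1 r)%g; rewrite permKV in s_ins.
exists s'; split; last by exists (s^-1 r)%g.
by move=> /(submx_A (s^-1 r)%g); rewrite -s_ins.
Qed.

Lemma avoids_mx_ins_col (c : 'I_n.+1)
    (submx_A : forall r (M : 'M[bool]_n), submx_of A (ins_rc r c M) <-> submx_of (pmx tau) M)
    (s : 'S_n.+1) :
  avoids_mx A s <-> exists s' : 'S_n, avoids tau s' /\ exists r, pmx s = ins_rc r c (pmx s').
Proof.
rewrite /avoids_mx; split=> [avA | [s' [avtau [r ->]]] /submx_A //].
have [s' s_ins] := pmx_ins_rc_remove s c.
exists s'; split; last by exists (s c).
by move=> /(submx_A (s c)); rewrite -s_ins.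
Qed.

End AvoidsInsRc.

Theorem proposition11 (k : nat) (tau : 'S_k) :
  (forall n (s : 'S_n.+1),
      avoids_mx (mx_top tau) s <-> exists s' : 'S_n, avoids tau s' /\ add_max s' s) /\
  (forall n (s : 'S_n.+1),
      avoids_mx (mx_bottom tau) s <-> exists s' : 'S_n, avoids tau s' /\ add_min s' s) /\
  (forall n (s : 'S_n.+1),
      avoids_mx (mx_right tau) s <-> exists s' : 'S_n, avoids tau s' /\ add_last s' s) /\
  (forall n (s : 'S_n.+1),
      avoids_mx (mx_left tau) s <-> exists s' : 'S_n, avoids tau s' /\ add_first s' s).
Proof.
split; [|split; [|split]] => n s.
- apply: avoids_mx_ins_row => c M.
  exact: (submx_zero_row_ins_rc tau (@homo_lift_max_neq k n) (@homo_extend_at_max k n)).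
- apply: avoids_mx_ins_row => c M.
  exact: (submx_zero_row_ins_rc tau (@homo_lift0_neq k n) (@homo_extend_at0 k n)).
- apply: avoids_mx_ins_col => r M.
  exact: (submx_zero_col_ins_rc tau (@homo_lift_max_neq k n) (@homo_extend_at_max k n)).
- apply: avoids_mx_ins_col => r M.
  exact: (submx_zero_col_ins_rc tau (@homo_lift0_neq k n) (@homo_extend_at0 k n)).
Qed.
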